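(* Let $\phi$ be a proper partial coloring of $G$, let $xy$ be an uncolored edge, and let $\beta\in M(\phi,y)\cup\{\mathsf{blank}\}$. Consider running the Random Fan procedure with parameter $k_{\max}$ on input $(\phi,xy,x,\beta)$, and let $T$ be the number of attempts that fail (i.e., reach $k=k_{\max}$ without returning) before the first successful attempt. If $k_{\max}\ge\frac{8(1+\epsilon)}{\epsilon(2-\epsilon)}$, then for every $t\ge 0$, \[\mathbb{P}[T\ge t]\le\exp\left(-\epsilon^2\,t\,k_{\max}/100\right).\]
   Context: $G$ is a finite simple graph of maximum degree $\Delta$, $\epsilon\in(0,1)$ with $\Delta\ge1/\epsilon$, and $q=(1+\epsilon)\Delta$ is assumed to be an integer; $[q]=\{1,\ldots,q\}$. A partial coloring is a map $\phi\colon E(G)\to[q]\cup\{\mathsf{blank}\}$ ($\mathsf{blank}$ = uncolored), proper if distinct colored edges sharing a vertex get distinct colors. $M(\phi,v)=[q]\setminus\{\phi(vw):vw\in E(G)\}$ is the set of colors missing at $v$. For a vertex $v$ and $\theta\in[q]\cup\{\mathsf{blank}\}$, ''a random color from $M(\phi,v)\setminus\{\theta\}$'' is obtained by repeatedly drawing $\eta\in[q]$ uniformly at random until $\eta\ne\theta$ and $\eta\in M(\phi,v)$ (so it is uniform on $M(\phi,v)\setminus\{\theta\}$). The Random Fan procedure with parameter $k_{\max}\in\mathbb{N}$ on input $(\phi,xy,x,\beta)$ performs independent attempts until one returns. An attempt: set $y_0=y$, $k=0$, $\theta=\beta$. While $k<k_{\max}$: choose a random color $\eta$ from $M(\phi,y_k)\setminus\{\theta\}$;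 set $\theta=\mathsf{blank}$; if $\eta\in M(\phi,x)$, return; else if $\eta=\beta$, return; else if $\eta\in M(\phi,y_{j-1})$ for some $1\le j\le k$, return; otherwise increase $k$ by one and let $y_k$ be the unique neighbor of $x$ with $\phi(xy_k)=\eta$ (appending the edge $xy_k$ to the fan). If the while loop ends because $k=k_{\max}$, the attempt fails and a new attempt is started from scratch. An attempt that returns is called successful. *)

From mathcomp Require Import all_boot all_order all_algebra.
From mathcomp Require Import reals.
From mathcomp.analysis Require Import sequences exp.
Set Implicit Arguments. Unset Strict Implicit. Unset Printing Implicit Defensive.
Import Order.TTheory GRing.Theory Num.Theory.
Local Open Scope ring_scope.

Definition simple_graph (V : finType) (e : rel V) :=
  symmetric e /\ irreflexive e.

Definition deg (V : finType) (e : rel V) (v : V) : nat := #|[set w | e v w]|.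

Definition max_degree (V : finType) (e : rel V) : nat := (\max_(v : V) deg e v)%N.

(* A partial edge coloring with colors 'I_q (= [q], shifted to 0-based);
   phi u v = None means the edge uv is blank (uncolored).
   The value of phi on non-edges is irrelevant. *)
Definition pcoloring (V : finType) (q : nat) := V -> V -> option 'I_q.

Definition is_edge_coloring (V : finType) (e : rel V) q (phi : pcoloring V q) :=
  forall u v, phi u v = phi v u.

Definition proper_coloring (V : finType) (e : rel V) q (phi : pcoloring V q) :=
  forall v w w' (c : 'I_q), e v w -> e v w' -> w != w' ->
    phi v w = Some c -> phi v w' <> Some c.

Definition missing (V : finType) (e : rel V) q (phi : pcoloring V q) (v : V)
  : {set 'I_q} :=
  [set c | ~~ [exists w, e v w && (phi v w == Some c)]].

(* the (unique, for proper phi) neighbor w of x with phi(xw) = c; default x *)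
Definition nbr_col (V : finType) (e : rel V) q (phi : pcoloring V q) (x : V)
  (c : 'I_q) : V :=
  odflt x [pick w | e x w && (phi x w == Some c)].

Section RandomFan.
Variables (R : realType) (V : finType) (e : rel V) (q : nat)
          (phi : pcoloring V q) (x : V) (beta : option 'I_q).

(* Probability that a single attempt of Random Fan on input (phi, xy, x, beta)
   fails, computed from the current state: n = k_max - k steps remaining,
   fan = [:: y_0; ...; y_{k-1}], cur = y_k, theta the excluded value.
   eta is uniform on M(phi, y_k) \ {theta}. *)
Fixpoint attempt_fail_prob (n : nat) (fan : seq V) (cur : V)
  (theta : option 'I_q) : R :=
  match n with
  | 0 => 1
  | n'.+1 =>
    let S := [set c in missing e phi cur | Some c != theta] in
    \sum_(c in S) (#|S|%:R)^-1 *
      (if [|| c \in missing e phi x, Some c == beta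
            | has (fun w => c \in missing e phi w) fan]
       then 0
       else attempt_fail_prob n' (rcons fan cur) (nbr_col e phi x c) None)
  end.

End RandomFan.

Definition fail_prob (R : realType) (V : finType) (e : rel V) q
  (phi : pcoloring V q) (x y : V) (beta : option 'I_q) (kmax : nat) : R :=
  attempt_fail_prob R e phi x beta kmax [::] y beta.

(* P[T >= t] where T = number of failed attempts before the first successful
   one; attempts are independent and identically distributed, so
   T >= t  iff  the first ceil(t) attempts fail. *)
Definition prob_T_ge (R : realType) (V : finType) (e : rel V) q
  (phi : pcoloring V q) (x y : V) (beta : option 'I_q) (kmax : nat) (t : R) : R :=
  fail_prob R e phi x y beta kmax ^+ `|Num.ceil t|%N.

From mathcomp Require Import all_boot all_order all_algebra.
From mathcomp Require Import reals.
From mathcomp.analysis Require Import sequences exp.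
From mathcomp Require Import ring lra.
Import Order.TTheory GRing.Theory Num.Theory.
Local Open Scope ring_scope.
Set Implicit Arguments. Unset Strict Implicit.

(* Within one attempt every step draws uniformly from at least d = q - Delta
   colors, and a step extends the fan only with a color c present at x that is
   missing on no fan vertex so far; afterwards c is missing on the fan.  With
   the potential Phi = #{colors present at x and missing on no fan vertex} / d,
   a step that extends with probability p lowers Phi by at least p, and
   p <= exp (p - 1).  By induction an attempt fails with probability at most
   exp (Phi_0 - kmax) <= exp (Delta / d - kmax) = exp (1 / eps - kmax), and the
   bound on kmax turns this into exp (- eps^2 kmax / 100). *)

Section MissingColors.
Variables (V : finType) (e : rel V) (q : nat) (phi : pcoloring V q).

Definition colored_nbrs (w : V) : {set V} := [set w' | e w w' & phi w w' != None].

Lemma card_present_le_colored w :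
  (#|~: missing e phi w| <= #|colored_nbrs w|)%N.
Proof.
have sub : Some @: (~: missing e phi w) \subset phi w @: colored_nbrs w.
  apply/subsetP => o /imsetP [c]; rewrite !inE negbK.
  case/existsP => w' /andP [ew' /eqP pw'] ->.
  by apply/imsetP; exists w'; rewrite // inE ew' pw'.
rewrite -(card_imset _ (@Some_inj _)).
exact: leq_trans (subset_leq_card sub) (leq_imset_card _ _).
Qed.

Lemma colored_nbrs_sub w : colored_nbrs w \subset [set w' | e w w'].
Proof. by apply/subsetP => w'; rewrite !inE => /andP []. Qed.

Lemma card_present_le_deg w : (#|~: missing e phi w| <= deg e w)%N.
Proof.
exact: leq_trans (card_present_le_colored w) (subset_leq_card (colored_nbrs_sub w)).
Qed.

Lemma card_missing_add_colored w : (q <= #|missing e phi w| + #|colored_nbrs w|)%N.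
Proof.
by rewrite -{1}(card_ord q) -(cardsC (missing e phi w)) leq_add2l card_present_le_colored.
Qed.

Lemma card_missing_add_deg w : (q <= #|missing e phi w| + deg e w)%N.
Proof.
apply: leq_trans (card_missing_add_colored w) _.
by rewrite leq_add2l subset_leq_card ?colored_nbrs_sub.
Qed.

Lemma card_missing_add_deg_uncolored w z :
  e w z -> phi w z = None -> (q < #|missing e phi w| + deg e w)%N.
Proof.
move=> ewz pwz; apply: leq_ltn_trans (card_missing_add_colored w) _.
rewrite ltn_add2l proper_card //; apply/properP; split; first exact: colored_nbrs_sub.
by exists z; rewrite !inE ewz // pwz.
Qed.

Definition choices (cur : V) (theta : option 'I_q) : {set 'I_q} :=
  [set c in missing e phi cur | Some c != theta].

Lemma choices_None cur : choices cur None = missing e phi cur.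
Proof. by apply/setP => c; rewrite !inE andbT. Qed.

Lemma card_missing_le_choices cur theta :
  (#|missing e phi cur| <= (#|choices cur theta|).+1)%N.
Proof.
case: theta => [b|]; last by rewrite choices_None.
have sub : missing e phi cur \subset b |: choices cur (Some b).
  apply/subsetP => c cm; rewrite in_setU1; have [// | cb] := eqVneq c b.
  by apply/setIdP; split => //; apply: contra_neq cb => -[].
apply: leq_trans (subset_leq_card sub) _; rewrite cardsU1.
by case: (b \in _).
Qed.

End MissingColors.

Lemma expR_potential_step (R : realType) (d s k a a' n : R) :
  0 < d <= s -> 0 <= k -> a' + k <= a ->
  k / s * expR (a' / d - n) <= expR (a / d - (n + 1)).
Proof.
move=> /andP [d0 ds] k0 hk.
have s0 : 0 < s by apply: lt_le_trans ds.
pose p := k / s.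
have p0 : 0 <= p by rewrite divr_ge0 // ltW.
have pkd : p <= k / d by rewrite ler_pdivrMr // mulrAC ler_pdivlMr // ler_wpM2l.
have hexp : expR (a' / d - n) <= expR (a / d - n - p).
  have : a' / d + k / d <= a / d by rewrite -mulrDl ler_pM2r ?invr_gt0.
  rewrite ler_expR; lra.
have hp : p <= expR (p - 1) by have := expR_ge1Dx (p - 1); rewrite addrC subrK.
apply: le_trans (ler_pM p0 (expR_ge0 _) hp hexp) _.
by rewrite -expRD; have -> : p - 1 + (a / d - n - p) = a / d - (n + 1) by ring.
Qed.

Section AttemptFailure.
Variables (R : realType) (V : finType) (e : rel V) (q : nat) (phi : pcoloring V q)
          (x : V) (beta : option 'I_q).

Definition stops (fan : seq V) (c : 'I_q) : bool :=
  [|| c \in missing e phi x, Some c == beta | has (fun w => c \in missing e phi w) fan].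

Definition extending (fan : seq V) (cur : V) (theta : option 'I_q) : {set 'I_q} :=
  [set c in choices e phi cur theta | ~~ stops fan c].

Definition fan_missing (fan : seq V) : {set 'I_q} :=
  [set c in ~: missing e phi x | has (fun w => c \in missing e phi w) fan].

Lemma in_extending fan cur theta c :
  (c \in extending fan cur theta) = (c \in choices e phi cur theta) && ~~ stops fan c.
Proof. by rewrite inE. Qed.

Lemma fan_missing_nil : fan_missing [::] = set0.
Proof. by apply/setP => c; rewrite in_set0; apply/setIdP => -[]. Qed.

Lemma fan_missing_sub fan : fan_missing fan \subset ~: missing e phi x.
Proof. by apply/subsetP => c; rewrite inE => /andP []. Qed.

Lemma card_fan_missing_rcons fan cur theta :
  (#|fan_missing fan| + #|extending fan cur theta| <= #|fan_missing (rcons fan cur)|)%N.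
Proof.
have disj : fan_missing fan :&: extending fan cur theta = set0.
  apply/setP => c; rewrite in_set0.
  apply/setIP => -[/setIdP [_ hfan] /setIdP [_]].
  by rewrite /stops hfan !orbT.
rewrite -cardsUI disj cards0 addn0 subset_leq_card //.
apply/subsetP => c /setUP [/setIdP [cA hfan] | /setIdP [/setIdP [ccur _]]].
  by apply/setIdP; rewrite has_rcons hfan orbT.
rewrite /stops => /norP [cx _].
by apply/setIdP; rewrite has_rcons /= ccur in_setC.
Qed.

Lemma attempt_fail_prob_ge0 n fan cur theta :
  0 <= attempt_fail_prob R e phi x beta n fan cur theta.
Proof.
elim: n fan cur theta => [|n IH] fan cur theta /=; first exact: ler01.
by apply: sumr_ge0 => c _; rewrite mulr_ge0 ?invr_ge0 //; case: ifP.
Qed.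

Variable d : R.
Hypothesis d_gt0 : 0 < d.
Hypothesis d_le_missing_nbr :
  forall c, c \notin missing e phi x -> d <= #|missing e phi (nbr_col e phi x c)|%:R.

Lemma attempt_fail_prob_le n fan cur theta :
  d <= #|choices e phi cur theta|%:R ->
  attempt_fail_prob R e phi x beta n fan cur theta
    <= expR ((#|~: missing e phi x|%:R - #|fan_missing fan|%:R) / d - n%:R).
Proof.
elim: n fan cur theta => [|n IH] fan cur theta hS /=.
  rewrite subr0; apply: le_trans (expR_ge1Dx _).
  by rewrite lerDl divr_ge0 ?(ltW d_gt0) // subr_ge0 ler_nat subset_leq_card ?fan_missing_sub.
rewrite -/(choices e phi cur theta); set s := #|choices e phi cur theta|%:R.
set E := expR ((#|~: missing e phi x|%:R - #|fan_missing (rcons fan cur)|%:R) / d - n%:R).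
have -> : \sum_(c in choices e phi cur theta) s^-1 * (if stops fan c then 0 else
      attempt_fail_prob R e phi x beta n (rcons fan cur) (nbr_col e phi x c) None)
    = \sum_(c in extending fan cur theta)
        s^-1 * attempt_fail_prob R e phi x beta n (rcons fan cur) (nbr_col e phi x c) None.
  rewrite big_mkcond [RHS]big_mkcond; apply: eq_bigr => c _.
  by rewrite in_extending; case: (c \in _); case: (stops fan c); rewrite ?mulr0.
apply: le_trans (_ : \sum_(c in extending fan cur theta) s^-1 * E <= _).
  apply: ler_sum => c; rewrite in_extending => /andP [_ /norP [hc _]].
  rewrite ler_wpM2l ?invr_ge0 // IH // choices_None.
  exact: d_le_missing_nbr.
rewrite sumr_const -mulrnAl -[s^-1 *+ _]mulr_natr [s^-1 * _]mulrC -addn1 natrD.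
apply: expR_potential_step; rewrite ?hS ?d_gt0 //.
have := card_fan_missing_rcons fan cur theta; rewrite -(ler_nat R) natrD; lra.
Qed.

End AttemptFailure.

Lemma fail_prob_le_expR (R : realType) (V : finType) (e : rel V) (q : nat)
    (phi : pcoloring V q) (x y : V) (beta : option 'I_q) (kmax D : nat) :
  (forall w, deg e w <= D)%N -> (D < q)%N -> symmetric e -> is_edge_coloring e phi ->
  e x y -> phi x y = None ->
  fail_prob R e phi x y beta kmax <= expR (D%:R / (q - D)%:R - kmax%:R).
Proof.
move=> deg_le Dq e_sym sym_phi exy pxy.
have add_deg_le w : (#|missing e phi w| + deg e w <= #|missing e phi w| + D)%N.
  by rewrite leq_add2l.
pose d := (q - D)%:R : R.
have d_gt0 : 0 < d by rewrite ltr0n subn_gt0.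
have d_le n : (q <= n + D)%N -> d <= n%:R by rewrite ler_nat leq_subLR addnC.
have d_le_nbr c : c \notin missing e phi x -> d <= #|missing e phi (nbr_col e phi x c)|%:R.
  by move=> _; apply/d_le/(leq_trans (card_missing_add_deg _ _ _) (add_deg_le _)).
have d_le_choices : d <= #|choices e phi y beta|%:R.
  apply/d_le; rewrite -ltnS -addSn.
  have yx_uncolored : phi y x = None by rewrite sym_phi.
  rewrite e_sym in exy.
  apply: leq_trans (card_missing_add_deg_uncolored exy yx_uncolored) _.
  by apply: leq_trans (add_deg_le _) _; rewrite leq_add2r card_missing_le_choices.
apply: le_trans (attempt_fail_prob_le beta d_gt0 d_le_nbr kmax [::] d_le_choices) _.
rewrite fan_missing_nil cards0 subr0 ler_expR lerD2r ler_pM2r ?invr_gt0 // ler_nat.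
exact: leq_trans (card_present_le_deg _ _ _) (deg_le _).
Qed.

Lemma kmax_exponent_le (R : realFieldType) (eps K u : R) :
  0 < eps < 1 -> u <= eps^-1 -> 8 * (1 + eps) / (eps * (2 - eps)) <= K ->
  u - K <= - (eps ^+ 2 * K / 100).
Proof.
move=> /andP [eps0 eps1] hu hK.
have u0 : 0 < eps^-1 by rewrite invr_gt0.
have h4 : 4 * eps^-1 <= K.
  apply: le_trans hK; rewrite ler_pdivlMr; last by rewrite mulr_gt0 // subr_gt0; lra.
  have -> : 4 * eps^-1 * (eps * (2 - eps)) = 4 * (2 - eps) by field; rewrite gt_eqF.
  lra.
have hsq : eps ^+ 2 * K <= K.
  by rewrite ler_piMl ?expr_le1 ?sqr_ge0 //; lra.
lra.
Qed.

Lemma exprn_ceil_le_expR (R : realType) (p a t : R) :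
  0 <= p -> p <= expR (- a) -> 0 <= a -> 0 <= t ->
  p ^+ `|Num.ceil t|%N <= expR (- (t * a)).
Proof.
move=> p0 pa a0 t0.
apply: le_trans (_ : expR (- a) ^+ `|Num.ceil t|%N <= _); first by rewrite lerXn2r ?nnegrE ?expR_ge0.
rewrite -expRM_natl ler_expR mulrN lerN2 ler_wpM2r //.
by rewrite natr_absz ger0_norm ?ceil_ge // ceil_ge0; lra.
Qed.

Theorem proposition5p1 (R : realType) (V : finType) (e : rel V)
  (eps : R) (q : nat) (phi : pcoloring V q) (x y : V) (beta : option 'I_q)
  (kmax : nat) :
  simple_graph e ->
  0 < eps < 1 ->
  (max_degree e)%:R >= eps^-1 ->
  q%:R = (1 + eps) * (max_degree e)%:R ->
  is_edge_coloring e phi -> proper_coloring e phi ->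
  e x y -> phi x y = None ->
  (match beta with Some c => c \in missing e phi y | None => true end) ->
  kmax%:R >= 8 * (1 + eps) / (eps * (2 - eps)) ->
  forall t : R, 0 <= t ->
    prob_T_ge e phi x y beta kmax t <= expR (- (eps ^+ 2 * t * kmax%:R) / 100).
Proof.
move=> [e_sym _] eps01 hD hq sym_phi _ exy pxy _ hk t t0.
set D := max_degree e in hD hq.
have eps0 : 0 < eps by case/andP: eps01.
have D0 : 0 < D%:R :> R by apply: lt_le_trans hD; rewrite invr_gt0.
have Dq : (D < q)%N by rewrite -(ltr_nat R) hq mulrDl mul1r ltrDl mulr_gt0.
have gap : (q - D)%:R = eps * D%:R :> R by rewrite natrB ?(ltnW Dq) // hq; ring.
have deg_le w : (deg e w <= D)%N by exact: (@leq_bigmax _ (deg e) w).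
have := fail_prob_le_expR R beta kmax deg_le Dq e_sym sym_phi exy pxy.
rewrite gap (_ : D%:R / (eps * D%:R) = eps^-1); last by field; rewrite !gt_eqF.
move=> fail_le.
have -> : - (eps ^+ 2 * t * kmax%:R) / 100 = - (t * (eps ^+ 2 * kmax%:R / 100)) by ring.
apply: exprn_ceil_le_expR => //.
- exact: attempt_fail_prob_ge0.
- apply: le_trans fail_le _; rewrite ler_expR.
  exact: kmax_exponent_le.
- by rewrite divr_ge0 // mulr_ge0 // sqr_ge0.
Qed.
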